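(* Let $\mathcal A$ be an uncountable almost disjoint family on a countable set $W$. If $\mathcal A$ is Luzin then $\mathcal A$ is near-Luzin.
   Context: An almost disjoint family is a collection of infinite sets whose pairwise intersections are finite. $\mathcal A$ is Luzin iff there is an enumeration $\mathcal A=\{a_\alpha:\alpha<\omega_1\}$ such that for every finite $w\subseteq W$ and every $\alpha<\omega_1$ the set $\{\beta<\alpha: a_\alpha\cap a_\beta\subseteq w\}$ is finite. $\mathcal A$ is near-Luzin iff for all uncountable $\mathcal C,\mathcal D\subseteq\mathcal A$ the set $\bigcup\mathcal C\cap\bigcup\mathcal D$ is infinite. *)

From HB Require Import structures.
From mathcomp Require Import all_boot all_order.
From mathcomp Require Import boolp classical_sets cardinality.
Set Implicit Arguments. Unset Strict Implicit. Unset Printing Implicit Defensive.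
Local Open Scope classical_set_scope.

Definition almost_disjoint (W : Type) (A : set (set W)) : Prop :=
  (forall a, A a -> infinite_set a) /\
  (forall a b, A a -> A b -> a <> b -> finite_set (a `&` b)).

(* (I, lt) is order-isomorphic to omega_1: a well-ordering (strict,
   total, well-founded) whose carrier is uncountable but every proper
   initial segment {b | b < a} is countable. *)
Definition omega1_order (I : Type) (lt : I -> I -> Prop) : Prop :=
  (forall x, ~ lt x x) /\
  (forall x y z, lt x y -> lt y z -> lt x z) /\
  (forall x y, lt x y \/ x = y \/ lt y x) /\
  well_founded lt /\
  ~ countable [set: I] /\
  (forall a, countable [set b | lt b a]).

Definition Luzin (W : Type) (A : set (set W)) : Prop :=
  exists (I : Type) (lt : I -> I -> Prop) (e : I -> set W),
    [/\ omega1_order lt,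
        (forall x y, e x = e y -> x = y),
        e @` setT = A &
        (forall (w : set W), finite_set w -> forall alpha : I,
            finite_set [set beta | lt beta alpha /\ e alpha `&` e beta `<=` w])].

Definition near_Luzin (W : Type) (A : set (set W)) : Prop :=
  forall C D : set (set W), C `<=` A -> D `<=` A ->
    ~ countable C -> ~ countable D ->
    infinite_set ((\bigcup_(c in C) c) `&` (\bigcup_(d in D) d)).

From mathcomp Require Import all_boot all_order.
From mathcomp Require Import boolp classical_sets cardinality.
Local Open Scope classical_set_scope.

(* Index the members of C and D by the Luzin enumeration e. If the two unions
   met in a finite set w, pick a countably infinite set S of indices of C;
   as initial segments are countable, some index alpha of D lies above all of
   S. Every beta in S then satisfies beta < alpha and e alpha ∩ e beta ⊆ w,
   against the finiteness required by the Luzin property. *)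

Lemma countableU T (A B : set T) :
  countable A -> countable B -> countable (A `|` B).
Proof. by move=> cA cB; rewrite -bigcup2E; apply: bigcup_countable => // -[|[|]]. Qed.

Lemma infinite_countable_subset T (A : set T) :
  infinite_set A -> exists2 S, S `<=` A & countable S /\ infinite_set S.
Proof.
move=> /infiniteP /card_subP[S /card_eqPle[S_le_nat nat_le_S] SA].
by exists S => //; split; [exact: S_le_nat | apply/infiniteP].
Qed.

Lemma uncountable_preimage {T U : Type} {e : T -> U} {X : set U} :
  X `<=` range e -> ~ countable X -> ~ countable (e @^-1` X).
Proof.
move=> Xe uX cXe; apply: uX; apply: sub_countable cXe.
apply: card_le_trans (card_image_le e _); apply: subset_card_le => x Xx.
by have [i _ ex] := Xe x Xx; exists i; rewrite /preimage /= ex.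
Qed.

Section CountableSegments.
Context {I : Type} {lt : I -> I -> Prop}.
Hypothesis lt_total : forall x y, lt x y \/ x = y \/ lt y x.
Hypothesis segment_countable : forall a, countable [set b | lt b a].

Lemma countable_bounded_in_uncountable {S D : set I} :
  countable S -> ~ countable D ->
  exists2 alpha, D alpha & forall s, S s -> lt s alpha.
Proof.
move=> cS uD.
pose U := S `|` \bigcup_(s in S) [set b | lt b s].
have cU : countable U by apply: countableU => //; apply: bigcup_countable.
have [alpha Dalpha notUalpha] : exists2 alpha, D alpha & ~ U alpha.
  apply: contrapT => noD_U; apply: uD; apply: sub_countable cU.
  by apply: subset_card_le => a Da; apply: contrapT => nUa; apply: noD_U; exists a.
exists alpha => // s Ss; have [//|[s_alpha|alpha_s]] := lt_total s alpha.
  by case: notUalpha; left; rewrite -s_alpha.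
by case: notUalpha; right; exists s.
Qed.

Context {W : Type} {e : I -> set W}.
Hypothesis e_Luzin : forall w : set W, finite_set w -> forall alpha : I,
  finite_set [set beta | lt beta alpha /\ e alpha `&` e beta `<=` w].

Lemma Luzin_bigcupI_infinite {CI DI : set I} :
  ~ countable CI -> ~ countable DI ->
  infinite_set ((\bigcup_(i in CI) e i) `&` (\bigcup_(j in DI) e j)).
Proof.
move=> uC uD w_finite.
have /infinite_countable_subset[S SC [cS iS]] : infinite_set CI.
  by move/finite_set_countable.
have [alpha Dalpha S_lt_alpha] := countable_bounded_in_uncountable cS uD.
apply: iS; apply: (sub_finite_set _ (e_Luzin _ w_finite alpha)) => s Ss.
split; first exact: S_lt_alpha.
by move=> x [xa xs]; split; [exists s => //; exact: SC | exists alpha].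
Qed.

End CountableSegments.

Theorem claim0p4 (W : Type) (A : set (set W)) :
  countable [set: W] -> almost_disjoint A -> ~ countable A ->
  Luzin A -> near_Luzin A.
Proof.
move=> _ _ _ [I [lt [e [[_ [_ [lt_total [_ [_ segment_countable]]]]] _ eA e_Luzin]]]].
move=> C D CA DA uC uD.
have rangeA : A `<=` range e by rewrite eA.
have uCI := uncountable_preimage (subset_trans CA rangeA) uC.
have uDI := uncountable_preimage (subset_trans DA rangeA) uD.
apply: sub_infinite_set (Luzin_bigcupI_infinite lt_total segment_countable e_Luzin uCI uDI).
by apply: setISS => x [i Xi eix]; exists (e i).
Qed.
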